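(* Let $\mathbf{k}$ be a commutative ring, $n\ge0$, $\mathcal{A}=\mathbf{k}[S_n]$. If $\beta,\gamma\in\operatorname{Comp}_n$ and $\widetilde{\beta}\preceq_\pi\widetilde{\gamma}$, then $\mathcal{R}_\beta\subseteq\mathcal{R}_\gamma$.
   Context: $S_n$ is the symmetric group on $[n]=\{1,\dots,n\}$, with product $(uw)(i)=u(w(i))$. For $w\in S_n$, $\operatorname{Des}(w)=\{i\in[n-1]: w(i)>w(i+1)\}$. For $I\subseteq[n-1]$, $\mathbf{B}_I=\sum_{w\in S_n,\ \operatorname{Des}(w)\subseteq I} w\in\mathcal{A}$. A composition $\alpha=(\alpha_1,\dots,\alpha_p)$ of $n$ is a finite sequence of positive integers with sum $n$; $\operatorname{Comp}_n$ is the set of these. $\operatorname{Set}(\alpha)=\{\alpha_1,\alpha_1+\alpha_2,\dots,\alpha_1+\cdots+\alpha_{p-1}\}$, and $\mathbf{B}_\alpha:=\mathbf{B}_{\operatorname{Set}(\alpha)}$. The underlying partition $\widetilde\alpha$ is obtained by sorting the parts of $\alpha$ in weakly decreasing order. A composition $\alpha=(\alpha_1,\dots,\alpha_m)$ refines $\beta=(\beta_1,\dots,\beta_p)$ if $\alpha$ can be split into $p$ contiguous subsequences whose $j$-th one sums to $\beta_j$. For partitions $\lambda,\mu$ of $n$, $\lambda\preceq_\pi\mu$ means some rearrangement of the parts of $\lambda$ (as a composition) refines $\mu$; equivalently, writing $\lambda=(\lambda_1,\dots,\lambda_k)$, $\mu=(\mu_1,\dots,\mu_l)$, there is a map $f:[k]\to[l]$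 with $\mu_j=\sum_{i\in f^{-1}(j)}\lambda_i$ for all $j$. For $\beta\in\operatorname{Comp}_n$, $\mathcal{R}_\beta:=\mathbf{B}_\beta\mathcal{A}$. *)

From HB Require Import structures.
From mathcomp Require Import all_boot all_order all_algebra all_fingroup.
Set Implicit Arguments. Unset Strict Implicit. Unset Printing Implicit Defensive.
Import GRing.Theory.
Local Open Scope ring_scope.

(* Elements of the group algebra k[S_n]: finitely supported functions S_n -> k,
   i.e. sum_w f(w) w. *)
Definition KS (k : comPzRingType) (n : nat) := {ffun 'S_n -> k}.

(* Paper's product of permutations: (u w)(i) = u (w i).  In MathComp,
   (w * u)%g x = u (w x), so the paper's u w is MathComp's (w * u)%g. *)
Definition pmul (n : nat) (u w : 'S_n) : 'S_n := (w * u)%g.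

Definition ks_mul (k : comPzRingType) (n : nat) (f g : KS k n) : KS k n :=
  [ffun w => \sum_(u : 'S_n) \sum_(v : 'S_n | pmul u v == w) f u * g v].

(* One-line notation of w (values shifted to 0-based, harmless for comparisons). *)
Definition oneline (n : nat) (w : 'S_n) : seq nat := [seq val (w j) | j <- enum 'I_n].

(* Des(w) = { i in [n-1] : w(i) > w(i+1) }  (1-indexed positions). *)
Definition Des (n : nat) (w : 'S_n) : seq nat :=
  [seq i <- iota 1 n.-1 | nth 0%N (oneline w) i.-1 > nth 0%N (oneline w) i]%N.

Definition is_comp (n : nat) (a : seq nat) : Prop :=
  all (fun x => 0 < x)%N a /\ sumn a = n.

Definition SetC (a : seq nat) : seq nat :=
  [seq sumn (take j a) | j <- iota 1 (size a).-1].

Definition BI (k : comPzRingType) (n : nat) (I : seq nat) : KS k n :=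
  [ffun w => if all (fun i => i \in I) (Des w) then 1 else 0].

Definition Bcomp (k : comPzRingType) (n : nat) (a : seq nat) : KS k n :=
  BI k n (SetC a).

Definition underlying (a : seq nat) : seq nat := sort geq a.

Definition pi_le (la mu : seq nat) : Prop :=
  exists f : 'I_(size la) -> 'I_(size mu),
    forall j : 'I_(size mu), nth 0%N mu j = (\sum_(i | f i == j) nth 0%N la i)%N.

Definition Rcomp (k : comPzRingType) (n : nat) (b : seq nat) (x : KS k n) : Prop :=
  exists a : KS k n, x = ks_mul (Bcomp k n b) a.

From mathcomp Require Import all_boot all_order all_algebra all_fingroup.
From mathcomp Require Import zify.

Set Implicit Arguments.
Unset Strict Implicit.
Unset Printing Implicit Defensive.

(* B_beta is the sum of the permutations that increase on every block of
   positions of beta; this depends only on the set partition of the positions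
   into blocks, so the blocks may be labelled by the parts of the underlying
   partition.  If the parts of beta~ merge into those of gamma~, then every w
   increasing on the beta-blocks factors uniquely as w = u v, where u increases
   on the gamma-blocks and v carries each beta-block increasingly into the
   gamma-block it merges into (in MathComp's composition order, w = v * u);
   the factor u is obtained by standardizing (stably sorting) the labellings.
   Hence B_beta = B_gamma T, where T is the sum of all such v, and B_beta A is
   contained in B_gamma A. *)

Lemma card_ord_lt n m : m <= n -> #|[set p : 'I_n | p < m]| = m.
Proof.
move=> le_mn; rewrite -sum1_card (eq_bigl (fun p : 'I_n => p < m)) => [|p]; last by rewrite inE.
by rewrite big_ord_narrow // big_const_ord iter_addn_0 mul1n.
Qed.

Lemma card_preim_comp (T I : finType) (J : eqType) (h : T -> I) (f : I -> J) j :
  #|[set x | f (h x) == j]| = \sum_(i | f i == j) #|[set x | h x == i]|.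
Proof.
rewrite -sum1_card (partition_big h (fun i => f i == j)) => [|x]; last by rewrite inE.
apply: eq_bigr => i /eqP fi; rewrite -sum1_card; apply: eq_bigl => x; rewrite !inE.
by case: (h x =P i) => [->|_]; rewrite ?fi ?eqxx ?andbF.
Qed.

Lemma leq_count_iota (P : pred nat) k j :
    (forall i i', i <= i' -> P i' -> P i) ->
  0 < j <= k -> (j <= count P (iota 1 k)) = P j.
Proof.
move=> P_anti /andP[j_gt0 le_jk]; rewrite -(subnKC le_jk) iotaD count_cat.
have P_iota i : i \in iota 1 j -> P j -> P i.
  by rewrite mem_iota => /andP[_ lt_ij]; apply: P_anti; rewrite -ltnS -add1n.
case Pj: (P j).
  rewrite (@eq_in_count _ _ predT) => [|i /P_iota ->] //.
  by rewrite count_predT size_iota leq_addr.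
rewrite (@eq_in_count _ _ pred0 (iota (1 + j) _)) ?count_pred0 ?addn0; last first.
  move=> i; rewrite mem_iota add1n => /andP[lt_ji _]; apply/negbTE.
  by apply: contraFN Pj; apply: P_anti; rewrite ltnW.
apply/negbTE; rewrite -ltnNge -[X in _ < X](size_iota 1 j) -(count_predC P).
rewrite -[X in X < _]addn0 ltn_add2l -has_count; apply/hasP; exists j => /=.
  by rewrite mem_iota j_gt0 add1n ltnSn.
by rewrite Pj.
Qed.

Lemma homo_ltn_blocks n (a f : nat -> nat) :
    {homo a : i j / i <= j} ->
    (forall i, i.+1 < n -> a i = a i.+1 -> f i < f i.+1) ->
  forall i j, i < j < n -> a i = a j -> f i < f j.
Proof.
move=> a_mono step i j /andP[lt_ij lt_jn] eq_a.
pose D := [pred x | (x < n) && (a x == a i)].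
have : {in D &, {homo f : x y / x < y}}.
  apply: homo_ltn_in => [y x z | x y /andP[_ /eqP ax] /andP[lt_yn /eqP ay] z | x].
  - exact: ltn_trans.
  - move=> /andP[/ltnW le_xz /ltnW le_zy].
    rewrite !inE (leq_ltn_trans le_zy lt_yn) /= eqn_leq -{1}ay a_mono //=.
    by rewrite -ax a_mono.
  - by move=> /andP[lt_xn /eqP ax] /andP[lt_x1n /eqP ax1]; apply: step; rewrite ?ax.
by move=> incr; apply: incr => //; rewrite inE /= ?lt_jn ?eq_a ?eqxx ?(ltn_trans lt_ij lt_jn).
Qed.

Lemma sumn_take_succ (b : seq nat) j : sumn (take j.+1 b) = sumn (take j b) + nth 0 b j.
Proof.
case: (ltnP j (size b)) => [lt_jb | le_bj]; first by rewrite (take_nth 0 lt_jb) sumn_rcons.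
by rewrite !take_oversize ?nth_default ?addn0 // ltnW.
Qed.

Lemma leq_sumn_take (b : seq nat) : {homo (fun j => sumn (take j b)) : i j / i <= j}.
Proof.
move=> i j /subnKC <-; elim: (j - i) => [|d IHd]; first by rewrite addn0.
by rewrite addnS sumn_take_succ (leq_trans IHd) ?leq_addr.
Qed.

Section GroupAlgebra.
Import GRing.Theory.
Local Open Scope ring_scope.
Variables (k : comPzRingType) (n : nat).

Lemma ks_mulE (f g : KS k n) w : ks_mul f g w = \sum_u f u * g (w * u^-1)%g.
Proof.
rewrite ffunE; apply: eq_bigr => u _.
rewrite (big_pred1 (w * u^-1)%g) // => v /=; rewrite /pmul.
by apply/eqP/eqP => [<-|->]; rewrite ?mulgK ?mulgVK.
Qed.

Lemma ks_mulA (f g h : KS k n) : ks_mul (ks_mul f g) h = ks_mul f (ks_mul g h).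
Proof.
apply/ffunP => w; rewrite !ks_mulE.
under eq_bigr do rewrite ks_mulE mulr_suml.
rewrite exchange_big /=; apply: eq_bigr => v _.
rewrite ks_mulE mulr_sumr (reindex_inj (@mulIg _ v)) /=.
by apply: eq_bigr => x _; rewrite mulgK invMg mulgA mulrA.
Qed.

Definition indic (P : pred 'S_n) : KS k n := [ffun w => if P w then 1 else 0].

Lemma ks_mul_indic (P Q : pred 'S_n) w :
  ks_mul (indic P) (indic Q) w = #|[set u | P u && Q (w * u^-1)%g]|%:R.
Proof.
rewrite ks_mulE (eq_bigr (fun u => if P u && Q (w * u^-1)%g then 1 else 0)).
  by rewrite -big_mkcond sumr_const cardsE.
by move=> u _; rewrite !ffunE; case: (P u); case: (Q _); rewrite ?mulr1 ?mulr0 ?mul0r.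
Qed.

End GroupAlgebra.

Section Labelings.
Variable n : nat.
Implicit Types (a c : 'I_n -> nat) (g u w : 'S_n) (p q x y : 'I_n).

Definition blockwise_incr a w : bool :=
  [forall p : 'I_n, forall q : 'I_n, (p < q) && (a p == a q) ==> (w p < w q)].

Lemma blockwise_incrP a w :
  reflect (forall p q, p < q -> a p = a q -> w p < w q) (blockwise_incr a w).
Proof.
apply: (iffP forallP) => [H p q lt_pq eq_a | H p].
  by have /forallP/(_ q) := H p; rewrite lt_pq eq_a eqxx; apply.
by apply/forallP => q; apply/implyP => /andP[lt_pq /eqP]; apply: H.
Qed.

Lemma eq_blockwise_incr a a' :
  (forall p q, (a p == a q) = (a' p == a' q)) -> blockwise_incr a =1 blockwise_incr a'.
Proof.
by move=> eq_aa' w; apply: eq_forallb => p; apply: eq_forallb => q; rewrite eq_aa'.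
Qed.

Lemma ltn_blockwise a w p q :
  blockwise_incr a w -> a p = a q -> (w p < w q) = (p < q).
Proof.
move=> /blockwise_incrP incr eq_a.
case: (ltngtP p q) => [lt_pq | lt_qp | /val_inj <-]; first exact: incr.
- by apply/negbTE; rewrite -leqNgt ltnW // incr.
- by rewrite ltnn.
Qed.

Lemma blockwise_incrV a c u :
  (forall x, a ((u^-1)%g x) = c x) -> blockwise_incr c (u^-1)%g = blockwise_incr a u.
Proof.
move=> eq_ac; apply/idP/idP => incr; apply/blockwise_incrP => p q lt_pq eq_pq.
  by rewrite -(ltn_blockwise incr) ?permK // -!eq_ac !permK.
by rewrite -(ltn_blockwise incr) ?permKV // !eq_ac.
Qed.

Lemma blockwise_incr_mul a b w g :
    (forall p q, a p = a q -> b (w p) = b (w q)) ->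
  blockwise_incr a w -> blockwise_incr b g -> blockwise_incr a (w * g)%g.
Proof.
move=> ab_w /blockwise_incrP incr_w incr_g; apply/blockwise_incrP => p q lt_pq eq_a.
by rewrite !permM (ltn_blockwise incr_g) ?incr_w ?(ab_w p q).
Qed.

Definition lexkey a x := a x * n + x.

Lemma ltn_lexkey a x y :
  (lexkey a x < lexkey a y) = (a x < a y) || (a x == a y) && (x < y).
Proof.
have := ltn_ord x; have := ltn_ord y; rewrite /lexkey.
by case: (ltngtP (a x) (a y)) => [lt_a | lt_a | ->] /=; nia.
Qed.

Lemma lexkey_inj a : injective (lexkey a).
Proof.
by move=> x y /(congr1 (modn^~ n)); rewrite /lexkey !modnMDl !modn_small //; apply: val_inj.
Qed.

Definition lexrank a x := #|[set y | lexkey a y < lexkey a x]|.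

Lemma lexrank_lt a x : lexrank a x < n.
Proof.
rewrite /lexrank -[X in _ < X]card_ord -cardsT; apply: proper_card.
apply/properP; split; first exact: subsetT.
by exists x; rewrite ?inE ?ltnn.
Qed.

Lemma ltn_lexrank a x y : (lexrank a x < lexrank a y) = (lexkey a x < lexkey a y).
Proof.
rewrite /lexrank; case: (ltnP (lexkey a x) (lexkey a y)) => [lt_xy | le_yx].
  apply: proper_card; apply/properP; split.
    by apply/subsetP => z; rewrite !inE => /ltn_trans; apply.
  by exists x; rewrite ?inE ?ltnn.
apply/negbTE; rewrite -leqNgt; apply/subset_leq_card/subsetP => z; rewrite !inE.
by move/leq_trans; apply.
Qed.

Lemma lexrank_inj a : injective (fun x => Ordinal (lexrank_lt a x)).
Proof.
move=> x y /(congr1 val) /= eq_lexrank; apply: (@lexkey_inj a x y).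
by case: (ltngtP (lexkey a x) (lexkey a y)) => //; rewrite -ltn_lexrank eq_lexrank ltnn.
Qed.

Definition std a : 'S_n := perm (@lexrank_inj a).

Lemma ltn_std a x y : (std a x < std a y) = (a x < a y) || (a x == a y) && (x < y).
Proof. by rewrite !permE /= ltn_lexrank ltn_lexkey. Qed.

Definition below a l := #|[set x | a x < l]|.

Lemma below_succ a l : below a l.+1 = below a l + #|[set x | a x == l]|.
Proof.
rewrite /below -(cardsID [set x | a x < l] [set x | a x < l.+1]).
by congr (_ + _); apply: eq_card => x; rewrite !inE ltnS; case: ltngtP.
Qed.

Lemma leq_below a : {homo below a : l m / l <= m}.
Proof.
by move=> l m le_lm; apply/subset_leq_card/subsetP => x; rewrite !inE => /leq_trans; apply.
Qed.

Lemma eq_below a c :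
  (forall l, #|[set x | a x == l]| = #|[set x | c x == l]|) -> below a =1 below c.
Proof.
move=> eq_card_ac; elim=> [|l IHl]; last by rewrite !below_succ IHl eq_card_ac.
by apply: eq_card => x; rewrite !inE.
Qed.

Lemma below_std a x : below a (a x) <= std a x < below a (a x).+1.
Proof.
rewrite permE /= /lexrank /below; apply/andP; split.
  by apply/subset_leq_card/subsetP => y; rewrite !inE ltn_lexkey => ->.
apply: proper_card; apply/properP; split; last by exists x; rewrite ?inE ?ltnn.
by apply/subsetP => y; rewrite !inE ltn_lexkey ltnS => /orP[/ltnW | /andP[/eqP-> _]].
Qed.

Lemma leq_label_std a l x : (l <= a x) = (below a l <= std a x).
Proof.
have /andP[ge_std lt_std] := below_std a x.
case: (leqP l (a x)) => [le_l | lt_l]; first by rewrite (leq_trans (leq_below a le_l)).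
by apply/esym/negbTE; rewrite -ltnNge (leq_trans lt_std) ?leq_below.
Qed.

Lemma std_label a c x y : below a =1 below c -> std a x = std c y -> a x = c y.
Proof.
move=> eq_ac eq_std; apply/anti_leq/andP; split.
  by rewrite (leq_label_std c) -eq_ac -eq_std -leq_label_std.
by rewrite (leq_label_std a) eq_ac eq_std -leq_label_std.
Qed.

Lemma std_matching a c g :
  (forall x, a (g x) = c x) -> blockwise_incr c g -> (g * std a)%g = std c.
Proof.
move=> ag_c incr; apply/permP => x; apply: val_inj; rewrite permM !permE /= /lexrank.
rewrite -(card_preimset _ (@perm_inj _ g)); apply: eq_card => y; rewrite !inE !ltn_lexkey !ag_c.
by case: eqP => //= eq_c; rewrite (ltn_blockwise incr eq_c).
Qed.

Lemma std_matching_label a c x :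
  below a =1 below c -> a ((std c * (std a)^-1)%g x) = c x.
Proof. by move=> eq_ac; apply: std_label eq_ac _; rewrite permM permKV. Qed.

Lemma std_matching_incr a c :
  below a =1 below c -> blockwise_incr c (std c * (std a)^-1)%g.
Proof.
move=> eq_ac; apply/blockwise_incrP => x y lt_xy eq_c.
have : std a ((std c * (std a)^-1)%g x) < std a ((std c * (std a)^-1)%g y).
  by rewrite !permM !permKV ltn_std eq_c eqxx ltnn lt_xy.
by rewrite ltn_std !std_matching_label // eq_c eqxx ltnn.
Qed.

Lemma std_matchingP a c g : below a =1 below c ->
  (forall x, a (g x) = c x) /\ blockwise_incr c g <-> g = (std c * (std a)^-1)%g.
Proof.
move=> eq_ac; split=> [[ag_c incr] | ->].
  by rewrite -(std_matching ag_c incr) mulgK.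
by split=> [x|]; [exact: std_matching_label | exact: std_matching_incr].
Qed.

End Labelings.

Definition block_transport n (bB bG F : 'I_n -> nat) (v : 'S_n) : bool :=
  [forall p, bG (v p) == F p] && blockwise_incr bB v.

Section BlockwiseFactorization.
Variables (n : nat) (bB bG F : 'I_n -> nat).
Hypothesis F_block_const : forall p q, bB p = bB q -> F p = F q.
Hypothesis card_F_bG : forall l, #|[set p | F p == l]| = #|[set p | bG p == l]|.

Lemma transport_labelP (w u : 'S_n) :
  reflect (forall x, bG ((u^-1)%g x) = F ((w^-1)%g x)) [forall p, bG ((w * u^-1)%g p) == F p].
Proof.
apply: (iffP forallP) => [label x | label p].
  by have /eqP := label ((w^-1)%g x); rewrite permM permKV.
by rewrite permM label permK.
Qed.

Lemma blockwise_factorization (w : 'S_n) : blockwise_incr bB w ->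
  let c x := F ((w^-1)%g x) in
  [set u | blockwise_incr bG u && block_transport bB bG F (w * u^-1)%g]
    = [set std bG * (std c)^-1]%g.
Proof.
move=> incr_w c.
have eq_Gc : below bG =1 below c.
  apply: eq_below => l; rewrite -card_F_bG -(card_preimset _ (@perm_inj _ (w^-1)%g)).
  by apply: eq_card => x; rewrite !inE.
have F_w p q : bB p = bB q -> c (w p) = c (w q) by rewrite /c !permK; apply: F_block_const.
apply/setP => u; rewrite !inE; apply/idP/eqP => [/and3P[incr_u /transport_labelP label_u _] | ->].
  have incr_u' : blockwise_incr c (u^-1)%g by rewrite (blockwise_incrV label_u).
  by rewrite -[u]invgK (proj1 (std_matchingP _ eq_Gc) (conj label_u incr_u')) invMg invgK.
have [label_u0 incr_u0] := proj2 (std_matchingP (std c * (std bG)^-1)%g eq_Gc) erefl.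
rewrite -(blockwise_incrV (c := c)); last by move=> x; rewrite invMg invgK label_u0.
rewrite invMg invgK incr_u0 /= /block_transport (blockwise_incr_mul F_w) // andbT.
by apply/forallP => p; rewrite permM label_u0 /c permK.
Qed.

Lemma indic_blockwise_factorization (k : comPzRingType) :
  indic k (blockwise_incr bB)
    = ks_mul (indic k (blockwise_incr bG)) (indic k (block_transport bB bG F)).
Proof.
apply/ffunP => w; rewrite ks_mul_indic ffunE.
have [incr_w | not_incr_w] := boolP (blockwise_incr bB w).
  by rewrite blockwise_factorization // cards1.
rewrite (_ : [set u | _] = set0) ?cards0 //; apply/setP => u; rewrite !inE.
apply: contraNF not_incr_w => /and3P[incr_u /forallP label_v incr_v].
rewrite -(mulgKV u w) (blockwise_incr_mul _ incr_v incr_u) // => p q /F_block_const eq_F.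
by rewrite (eqP (label_v p)) (eqP (label_v q)).
Qed.

End BlockwiseFactorization.

(* The block of b containing the 0-based position i.  Des is 1-based: a descent
   at i sits between the 0-based positions i.-1 and i. *)
Definition block_index (b : seq nat) i := count (fun s => s <= i) (SetC b).

Lemma block_index_succ b i :
  block_index b i.+1 = block_index b i + count_mem i.+1 (SetC b).
Proof.
rewrite /block_index; elim: (SetC b) => //= s S ->.
by rewrite [RHS]addnACA; congr (_ + _); rewrite -[s <= i]ltnS; case: ltngtP.
Qed.

Lemma leq_block_index b : {homo block_index b : i j / i <= j}.
Proof. by move=> i j le_ij; apply: sub_count => s /leq_trans; apply. Qed.

Lemma ltn_block_index b i j :
  i < sumn b -> (block_index b i < j) = (i < sumn (take j b)).
Proof.
move=> lt_ib; have b_gt0 : 0 < size b by case: b lt_ib.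
case: j => [|j]; first by rewrite ltn0 take0.
case: (ltnP j (size b).-1) => [lt_jb | le_bj].
  rewrite /block_index /SetC count_map ltnNge [RHS]ltnNge leq_count_iota ?ltnSn //.
  by move=> i' j' /(@leq_sumn_take b) le_ij /(leq_trans le_ij).
rewrite take_oversize ?lt_ib; last by rewrite -(prednK b_gt0).
rewrite ltnS (leq_trans _ le_bj) // /block_index.
by rewrite (leq_trans (count_size _ _)) // size_map size_iota.
Qed.

Section CompositionBlocks.
Variables (n : nat) (b : seq nat).
Hypothesis sum_b : sumn b = n.

Lemma below_block_index j : below (fun p : 'I_n => block_index b p) j = sumn (take j b).
Proof.
have le_jn : sumn (take j b) <= n.
  by rewrite -sum_b -[in X in _ <= X](cat_take_drop j b) sumn_cat leq_addr.
rewrite /below -[RHS](card_ord_lt le_jn).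
by apply: eq_card => p; rewrite !inE ltn_block_index // sum_b.
Qed.

Lemma card_block_index j : #|[set p : 'I_n | block_index b p == j]| = nth 0 b j.
Proof.
have := below_succ (fun p : 'I_n => block_index b p) j.
by rewrite !below_block_index sumn_take_succ => /addnI ->.
Qed.

End CompositionBlocks.

Lemma Des_sub_SetC n b (w : 'S_n) :
  all (fun i => i \in SetC b) (Des w) = blockwise_incr (fun p : 'I_n => block_index b p) w.
Proof.
have w_oneline (p : 'I_n) : nth 0 (oneline w) p = w p.
  by rewrite /oneline (nth_map p) ?size_enum_ord // nth_ord_enum.
have block_eq j : (block_index b j == block_index b j.+1) = (j.+1 \notin SetC b).
  by rewrite block_index_succ -{1}[block_index b j]addn0 eqn_add2l eq_sym; apply/eqP/count_memPn.
rewrite /Des all_filter; apply/allP/blockwise_incrP => [desc p q lt_pq eq_pq | incr i].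
  rewrite -!w_oneline; apply: (homo_ltn_blocks (@leq_block_index b) _ _ eq_pq); last first.
    by rewrite lt_pq /=.
  move=> j lt_jn /eqP; rewrite block_eq => notin.
  have j1_iota : j.+1 \in iota 1 n.-1 by rewrite mem_iota; lia.
  have := desc _ j1_iota; rewrite /= (negbTE notin) implybF -leqNgt leq_eqVlt.
  case/orP => [|//].
  rewrite (w_oneline (Ordinal (ltnW lt_jn))) (w_oneline (Ordinal lt_jn)) => /eqP/val_inj/perm_inj.
  by move/(congr1 val) => /= /n_Sn.
case: i => [|j]; rewrite mem_iota // => /andP[_ lt_jn]; apply/implyP => desc_j.
have lt_j1n : j.+1 < n by lia.
apply/negPn/negP; rewrite -block_eq => /eqP eq_j.
have := incr (Ordinal (ltnW lt_j1n)) (Ordinal lt_j1n) (ltnSn j) eq_j.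
by rewrite -!w_oneline /= ltnNge ltnW.
Qed.

Lemma Bcomp_blockwise k n b (a : 'I_n -> nat) :
    (forall p q, (a p == a q) = (block_index b p == block_index b q)) ->
  Bcomp k n b = indic k (blockwise_incr a).
Proof.
by move=> eq_a; apply/ffunP => w; rewrite !ffunE Des_sub_SetC -(eq_blockwise_incr eq_a).
Qed.

Lemma relabel_classes n (a : 'I_n -> nat) (b s : seq nat) :
    (forall j, #|[set p | a p == j]| = nth 0 b j) -> perm_eq s b ->
  exists2 h : 'I_n -> 'I_(size s),
    forall p q, (h p == h q) = (a p == a q) &
    forall i, #|[set p | h p == i]| = nth 0 s i.
Proof.
move=> card_a /(perm_iotaP 0)[Is perm_Is ->].
have uniq_Is : uniq Is by rewrite (perm_uniq perm_Is) iota_uniq.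
have a_Is p : a p \in Is.
  rewrite (perm_mem perm_Is) mem_iota add0n /=; apply: contraT; rewrite -leqNgt => le_ba.
  have /eqP := card_a (a p); rewrite nth_default // cards_eq0 => /eqP/setP/(_ p).
  by rewrite !inE eqxx.
have lt_Is p : index (a p) Is < size (map (nth 0 b) Is) by rewrite size_map index_mem.
exists (fun p => Ordinal (lt_Is p)) => [p q | i]; rewrite -?val_eqE /=.
  by apply/eqP/eqP => [/(index_inj 0 (a_Is p) (a_Is q)) | ->].
have lt_i : i < size Is by rewrite -[X in _ < X](size_map (nth 0 b)).
rewrite (nth_map 0) // -card_a; apply: eq_card => p; rewrite !inE -val_eqE /=.
by apply/eqP/eqP => [<- | ->]; rewrite ?nth_index ?index_uniq.
Qed.

Theorem proposition2p6 (k : comPzRingType) (n : nat) (b c : seq nat) :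
  is_comp n b -> is_comp n c ->
  pi_le (underlying b) (underlying c) ->
  forall x : KS k n, Rcomp b x -> Rcomp c x.
Proof.
move=> [_ sum_b] [_ sum_c] [f sum_f] x [y ->].
have [hB same_hB card_hB] := relabel_classes (card_block_index sum_b) (permEl (perm_sort geq b)).
have [hG same_hG card_hG] := relabel_classes (card_block_index sum_c) (permEl (perm_sort geq c)).
pose F p := val (f (hB p)).
exists (ks_mul (indic k (block_transport (fun p => val (hB p)) (fun p => val (hG p)) F)) y).
rewrite -ks_mulA (Bcomp_blockwise k (a := fun p => val (hB p))) => [|p q]; last first.
  by rewrite val_eqE same_hB.
rewrite (Bcomp_blockwise k (a := fun p => val (hG p))) => [|p q]; last first.
  by rewrite val_eqE same_hG.
rewrite -indic_blockwise_factorization => [//|p q /val_inj eq_hB|l]; first by rewrite /F eq_hB.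
rewrite (card_preim_comp (fun p => f (hB p)) val) (card_preim_comp hG val).
apply: eq_bigr => j _; rewrite card_preim_comp card_hG sum_f.
by apply: eq_bigr => i _; rewrite card_hB.
Qed.
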